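(* The shuffle product $\sqcup\!\sqcup\colon \mathbb{K}\langle\langle X\rangle\rangle\times\mathbb{K}\langle\langle X\rangle\rangle\to\mathbb{K}\langle\langle X\rangle\rangle$ is continuous with respect to the Fréchet topology, and the shuffle product $\sqcup\!\sqcup\colon \mathbb{K}_{LC}\langle\langle X\rangle\rangle\times\mathbb{K}_{LC}\langle\langle X\rangle\rangle\to\mathbb{K}_{LC}\langle\langle X\rangle\rangle$ is continuous with respect to the Silva topology.
   Context: $\mathbb{K}\in\{\mathbb{R},\mathbb{C}\}$. $X=\{x_0,\ldots,x_m\}$ is a finite alphabet, $X^\ast$ its set of words (including the empty word $\emptyset$), $|\eta|$ the length of $\eta$. $\mathbb{K}\langle\langle X\rangle\rangle$ is the space of all maps $c\colon X^\ast\to\mathbb{K}$ (formal power series $c=\sum_\eta(c,\eta)\eta$). The Fréchet topology on $\mathbb{K}\langle\langle X\rangle\rangle$ is the product topology via $\mathbb{K}\langle\langle X\rangle\rangle\cong\prod_{\eta\in X^\ast}\mathbb{K}$ (convergence = coefficientwise convergence). For $M>0$, $\|c\|_{\ell_\infty,M}=\sup_\eta |(c,\eta)|/(M^{|\eta|}|\eta|!)$ and $\ell_{\infty,M}(X^\ast,\mathbb{K})=\{c:\|c\|_{\ell_\infty,M}<\infty\}$ is a Banach space. $\mathbb{K}_{LC}\langle\langle X\rangle\rangle=\bigcup_{M>0}\ell_{\infty,M}(X^\ast,\mathbb{K})$ (the locally convergent series, i.e. those with $|(c,\eta)|\le KM^{|\eta|}|\eta|!$ for some $K,M$), carrying the Silva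 topology, i.e. the locally convex inductive limit topology of the Banach spaces $\ell_{\infty,M}(X^\ast,\mathbb{K})$, $M>0$. The shuffle product is the bilinear product determined on words by $(x_i\eta)\sqcup\!\sqcup(x_j\xi)=x_i(\eta\sqcup\!\sqcup(x_j\xi))+x_j((x_i\eta)\sqcup\!\sqcup\xi)$, $\eta\sqcup\!\sqcup\emptyset=\emptyset\sqcup\!\sqcup\eta=\eta$, extended to series by $(c\sqcup\!\sqcup d,\eta)=\sum_{\nu,\xi}(c,\nu)(d,\xi)(\nu\sqcup\!\sqcup\xi,\eta)$. *)

(* K ranges over R (an abstract realType) and its complex
   numbers R[i] (mathcomp-real-closed `complex`). *)
From mathcomp Require Import all_boot all_algebra.
From mathcomp Require Export reals complex.
Set Implicit Arguments. Unset Strict Implicit. Unset Printing Implicit Defensive.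
Import GRing.Theory Num.Theory.
Local Open Scope ring_scope.

Section Shuffle.
Variable m : nat.
Definition letter := 'I_m.+1.
Definition word := seq letter.

(* shuffle of two words, as the list of all resulting words with
   multiplicity:  (a u) ш (b v) = a (u ш (b v)) + b ((a u) ш v),
   u ш [::] = [::] ш u = u. *)
Fixpoint shw (u v : word) {struct u} : seq word :=
  match u with
  | [::] => [:: v]
  | a :: u' =>
    let fix shw_r (v : word) : seq word :=
      match v with
      | [::] => [:: u]
      | b :: v' => map (cons a) (shw u' v) ++ map (cons b) (shw_r v')
      end in shw_r v
  end.

Definition shw_coef (u v w : word) : nat := count_mem w (shw u v).

Variable K : numFieldType.

Definition series := word -> K.

(* (c ш d, w) = sum_{nu, xi} (c,nu)(d,xi)(nu ш xi, w).  Only pairs with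
   |nu| + |xi| = |w| can contribute, so the sum is over those (finitely
   many) pairs. *)
Definition shuffle (c d : series) : series := fun w =>
  \sum_(k < (size w).+1)
    \sum_(nu : (k : nat).-tuple letter)
      \sum_(xi : (size w - k).-tuple letter)
        c nu * d xi * (shw_coef nu xi w)%:R.

Definition frechet_open (U : series -> Prop) : Prop :=
  forall c, U c -> exists (F : seq word) (e : K), 0 < e /\
    forall c', (forall w, w \in F -> `|c' w - c w| < e) -> U c'.

Definition ell_ball (M r : K) (c : series) : Prop :=
  forall w, `|c w| <= r * M ^+ size w * (size w)`!%:R.

Definition LC (c : series) : Prop := exists M r, 0 < M /\ ell_ball M r c.

Definition abs_convex (V : series -> Prop) : Prop :=
  forall x y, V x -> V y -> forall a b : K, `|a| + `|b| <= 1 ->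
    V (fun w => a * x w + b * y w).

(* 0-neighbourhoods of the locally convex inductive limit topology:
   absolutely convex subsets of K_LC<<X>> whose trace on every Banach space
   l_{infty,M} is a 0-neighbourhood there. *)
Definition silva_zero_nbhd (V : series -> Prop) : Prop :=
  (forall c, V c -> LC c) /\ abs_convex V /\
  forall M, 0 < M -> exists2 r, 0 < r & forall e, ell_ball M r e -> V e.

Definition silva_open (U : series -> Prop) : Prop :=
  (forall c, U c -> LC c) /\
  forall c, U c -> exists V, silva_zero_nbhd V /\
    forall e, V e -> U (fun w => c w + e w).

End Shuffle.

Definition prod_open (T : Type) (op : (T -> Prop) -> Prop)
    (W : T * T -> Prop) : Prop :=
  forall p, W p -> exists U V, op U /\ op V /\ U p.1 /\ V p.2 /\
    forall x y, U x -> V y -> W (x, y).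

Definition shuffle_frechet_continuous (m : nat) (K : numFieldType) : Prop :=
  forall W : series m K -> Prop, frechet_open W ->
    prod_open (@frechet_open m K) (fun p => W (shuffle p.1 p.2)).

Definition shuffle_silva_continuous (m : nat) (K : numFieldType) : Prop :=
  (forall c d : series m K, LC c -> LC d -> LC (shuffle c d)) /\
  forall W : series m K -> Prop, silva_open W ->
    prod_open (@silva_open m K)
      (fun p => LC p.1 /\ LC p.2 /\ W (shuffle p.1 p.2)).

(* For the Frechet topology, each coefficient (c ш d, w) is a polynomial in the
   coefficients of c and d on the finitely many words of length at most |w|.

   For the Silva topology the basic estimate is
     |(a ш b, w)| <= sum_k |a|_k |b|_(n-k) (m+1)^n 2^n      (n = |w|),
   where |a|_k bounds the coefficients of a on words of length k.  Hence
   shuffling with a fixed c in K_LC maps l_(oo,M) boundedly into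
   l_(oo,4(m+1)M): K_LC is closed under ш and ш is separately continuous.
   Since x ш y - c ш d = c ш (y-d) + (x-c) ш d + (x-c) ш (y-d), it remains to
   find, for every absolutely convex 0-neighbourhood V, a 0-neighbourhood A with
   A ш A in V.  Let rho_N be a nonincreasing radius of a ball of
   l_(oo,32(m+1)(N+1)) inside V and let A consist of the a with
     4 |(a,w)| <= |w|! sum_(i <= |w|) rho_i (i+1)^|w|.
   By the archimedean property A absorbs every ball of every l_(oo,M).  For a, b
   in A, the degree-n part of a ш b scaled by 2^(n+1) lies in the rho_J-ball of
   l_(oo,32(m+1)(J+1)), J maximising rho_J (J+1)^n; V is absolutely convex, so
   it contains every series whose scaled homogeneous parts all lie in V. *)

From mathcomp Require Import all_boot all_order all_algebra reals complex.
From mathcomp Require Import boolp ring zify.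
Set Implicit Arguments. Unset Strict Implicit. Unset Printing Implicit Defensive.
Import Order.TTheory GRing.Theory Num.Theory.
Local Open Scope ring_scope.

Section ShuffleWords.
Variable m : nat.

Lemma size_shw (u v : word m) : (size (shw u v) <= 2 ^ (size u + size v))%N.
Proof.
elim: u v => [|a u IHu] v; first by rewrite expn_gt0.
elim: v => [|b v IHv]; first by rewrite expn_gt0.
rewrite /= size_cat !size_map addSn expnS mul2n -addnn.
by apply: leq_add; [exact: IHu | rewrite -addSnnS; exact: IHv].
Qed.

Lemma shw_coef_le (u v w : word m) : (shw_coef u v w <= 2 ^ (size u + size v))%N.
Proof. exact: leq_trans (count_size _ _) (size_shw u v). Qed.

End ShuffleWords.

Section Series.
Variables (m : nat) (K : numFieldType).
Local Notation series := (series m K).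
Local Notation word := (word m).

Lemma normr_shuffle_le (a b : series) (al be : nat -> K) (w : word) :
  (forall u, `|a u| <= al (size u)) -> (forall v, `|b v| <= be (size v)) ->
  `|shuffle a b w| <=
    \sum_(k < (size w).+1) al k * be (size w - k)%N * (m.+1 ^ size w * 2 ^ size w)%:R.
Proof.
move=> ha hb; apply: le_trans (ler_norm_sum _ _ _) _; apply: ler_sum => k _.
have sizeE : (k + (size w - k))%N = size w by rewrite subnKC // -ltnS.
pose t := al k * be (size w - k)%N * (2 ^ size w)%:R.
apply: (@le_trans _ _ (\sum_(nu : k.-tuple (letter m))
                        \sum_(xi : (size w - k).-tuple (letter m)) t)).
  apply: le_trans (ler_norm_sum _ _ _) _; apply: ler_sum => nu _.
  apply: le_trans (ler_norm_sum _ _ _) _; apply: ler_sum => xi _.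
  rewrite !normrM normr_nat; apply: ler_pM; rewrite ?mulr_ge0 //.
    by apply: ler_pM => //; [move: (ha nu) | move: (hb xi)]; rewrite size_tuple.
  by rewrite ler_nat; apply: leq_trans (shw_coef_le _ _ _) _; rewrite !size_tuple sizeE.
rewrite !sumr_const !card_tuple card_ord -mulrnA -expnD addnC sizeE.
by rewrite -[_ *+ _]mulr_natr natrM [_%:R * _%:R]mulrC mulrA.
Qed.

Lemma ell_ball_ge0 (M r : K) (c : series) : ell_ball M r c -> 0 <= r.
Proof. by move/(_ [::]); rewrite /= !mulr1; apply: le_trans. Qed.

Lemma ell_ball_le (M M' r r' : K) (c : series) : 0 <= M -> M <= M' -> r <= r' ->
  ell_ball M r c -> ell_ball M' r' c.
Proof.
move=> M0 MM' rr' hc w; have r0 := ell_ball_ge0 hc.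
apply: le_trans (hc w) _; apply: ler_wpM2r => //; apply: ler_pM; rewrite ?exprn_ge0 //.
by apply: lerXn2r; rewrite // nnegrE (le_trans M0 MM').
Qed.

Lemma ell_ball_lin (M r s a b : K) (x y : series) :
  ell_ball M r x -> ell_ball M s y ->
  ell_ball M (`|a| * r + `|b| * s) (fun w => a * x w + b * y w).
Proof.
move=> hx hy w; apply: le_trans (ler_normD _ _) _; rewrite !normrM !mulrDl -!mulrA.
by apply: lerD; apply: ler_wpM2l; rewrite // mulrA.
Qed.

Lemma ell_ball_shuffle (M r s : K) (a b : series) : 0 <= M ->
  ell_ball M r a -> ell_ball M s b ->
  ell_ball ((4 * m.+1)%:R * M) (r * s) (shuffle a b).
Proof.
move=> M0 ha hb w; have r0 := ell_ball_ge0 ha; have s0 := ell_ball_ge0 hb.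
set n := size w.
have rsM0 : 0 <= r * s * M ^+ n by rewrite !mulr_ge0 // exprn_ge0.
apply: le_trans (normr_shuffle_le (al := fun k => r * M ^+ k * k`!%:R)
  (be := fun k => s * M ^+ k * k`!%:R) w ha hb) _.
apply: (@le_trans _ _ (\sum_(k < n.+1) r * s * M ^+ n * (n`! * (m.+1 ^ n * 2 ^ n))%N%:R)).
  apply: ler_sum => k _; have kn : (k <= n)%N by rewrite -ltnS.
  rewrite [leLHS](_ : _ = r * s * M ^+ n * (k`! * (n - k)`! * (m.+1 ^ n * 2 ^ n))%N%:R).
    by rewrite ler_wpM2l // ler_nat leq_mul2r -(bin_fact kn) leq_pmull ?bin_gt0 ?orbT.
  by rewrite -[in M ^+ n](subnKC kn) exprD !natrM; ring.
rewrite sumr_const card_ord -[_ *+ n.+1]mulr_natr -mulrA -natrM.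
rewrite [leRHS](_ : _ = r * s * M ^+ n * ((4 * m.+1) ^ n * n`!)%N%:R); last first.
  by rewrite !(natrM, natrX) exprMn [_ ^+ n * M ^+ n]mulrC !mulrA.
rewrite ler_wpM2l // ler_nat.
apply: (@leq_trans (n`! * (m.+1 ^ n * 2 ^ n) * 2 ^ n)).
  by rewrite leq_mul2l ltn_expl // orbT.
by apply: eq_leq; rewrite (_ : 4 = 2 * 2)%N // !expnMn; ring.
Qed.

Lemma LC_common_ball (a b : series) : LC a -> LC b ->
  exists M ra rb, [/\ 0 < M, ell_ball M ra a & ell_ball M rb b].
Proof.
move=> [Ma [ra [Ma0 ha]]] [Mb [rb [Mb0 hb]]].
have [Ma0' Mb0'] := (ltW Ma0, ltW Mb0).
exists (Ma + Mb), ra, rb; split; first exact: addr_gt0.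
  by apply: ell_ball_le ha; rewrite ?lerDl.
by apply: ell_ball_le hb; rewrite ?lerDr.
Qed.

Lemma LC_lin (a b : K) (x y : series) : LC x -> LC y -> LC (fun w => a * x w + b * y w).
Proof.
move=> Lx Ly; have [M [rx [ry [M0 hx hy]]]] := LC_common_ball Lx Ly.
by exists M, (`|a| * rx + `|b| * ry); split; last exact: ell_ball_lin.
Qed.

Lemma LC_shuffle (a b : series) : LC a -> LC b -> LC (shuffle a b).
Proof.
move=> La Lb; have [M [ra [rb [M0 ha hb]]]] := LC_common_ball La Lb.
exists ((4 * m.+1)%:R * M), (ra * rb); split; first by rewrite mulr_gt0.
exact: ell_ball_shuffle (ltW M0) ha hb.
Qed.

(* A positive lower bound of two positive numbers that needs no comparison
   between them: [K] is not totally ordered. *)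
Definition pmin (a b : K) := a * b / (a + b).

Lemma pmin_gt0 (a b : K) : 0 < a -> 0 < b -> 0 < pmin a b.
Proof. by move=> a0 b0; rewrite divr_gt0 ?mulr_gt0 ?addr_gt0. Qed.

Lemma pmin_lel (a b : K) : 0 < a -> 0 < b -> pmin a b <= a.
Proof. by move=> a0 b0; rewrite ler_pdivrMr ?addr_gt0 // ler_wpM2l ?lerDr // ltW. Qed.

Lemma pmin_ler (a b : K) : 0 < a -> 0 < b -> pmin a b <= b.
Proof. by move=> a0 b0; rewrite ler_pdivrMr ?addr_gt0 // mulrC ler_wpM2l ?lerDl // ltW. Qed.

Lemma exists_argmax (f : nat -> K) (n : nat) : (forall i, 0 <= f i) ->
  exists2 J, (J <= n)%N & forall i, (i <= n)%N -> f i <= f J.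
Proof.
move=> f0; elim: n => [|n [J Jn maxJ]]; first by exists 0%N => // i; rewrite leqn0 => /eqP->.
have /orP[fJn | fnJ] := real_leVge (ger0_real (f0 J)) (ger0_real (f0 n.+1)).
  exists n.+1 => // i; rewrite leq_eqVlt => /predU1P[-> // | /maxJ /le_trans]; exact.
by exists J => [|i]; rewrite ?(leqW Jn) // leq_eqVlt => /predU1P[-> // | /maxJ].
Qed.

End Series.

Section Frechet.
Variables (m : nat) (K : numFieldType).
Local Notation series := (series m K).
Local Notation word := (word m).

Definition near_on (F : seq word) (e : K) (x c : series) :=
  forall w, w \in F -> `|x w - c w| < e.

Lemma near_on_le (F : seq word) (e e' : K) (x c : series) :
  e <= e' -> near_on F e x c -> near_on F e' x c.
Proof. by move=> ee' hx w /hx /lt_le_trans; apply. Qed.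

Section ContinuityOn.
Variables (F : seq word) (c d : series).

Definition cont_on (G : series -> series -> K) := forall e, 0 < e ->
  exists2 dl, 0 < dl & forall x y,
    near_on F dl x c -> near_on F dl y d -> `|G x y - G c d| < e.

Lemma cont_on_ext (G H : series -> series -> K) :
  (forall x y, G x y = H x y) -> cont_on G -> cont_on H.
Proof.
move=> GH hG e /hG [dl dl0 h]; exists dl => // x y hx hy.
by rewrite -!GH; exact: h.
Qed.

Lemma cont_on_cst (k : K) : cont_on (fun _ _ => k).
Proof. by move=> e e0; exists 1 => // x y _ _; rewrite subrr normr0. Qed.

Lemma cont_onD (G H : series -> series -> K) :
  cont_on G -> cont_on H -> cont_on (fun x y => G x y + H x y).
Proof.
move=> hG hH e e0; have e20 : 0 < e / 2 by rewrite divr_gt0.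
have [d1 d10 h1] := hG _ e20; have [d2 d20 h2] := hH _ e20.
exists (pmin d1 d2); first exact: pmin_gt0.
move=> x y hx hy; rewrite opprD addrACA.
apply: le_lt_trans (ler_normD _ _) _; rewrite [e]splitr.
have le1 : pmin d1 d2 <= d1 by exact: pmin_lel.
have le2 : pmin d1 d2 <= d2 by exact: pmin_ler.
apply: ltrD; first by apply: h1; [exact: near_on_le le1 hx | exact: near_on_le le1 hy].
by apply: h2; [exact: near_on_le le2 hx | exact: near_on_le le2 hy].
Qed.

Lemma cont_on_sum (I : Type) (r : seq I) (P : pred I) (G : I -> series -> series -> K) :
  (forall i, cont_on (G i)) -> cont_on (fun x y => \sum_(i <- r | P i) G i x y).
Proof.
move=> hG; elim: r => [|i r IH].
  by apply: cont_on_ext (cont_on_cst 0) => x y; rewrite big_nil.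
case Pi: (P i).
  by apply: cont_on_ext (cont_onD (hG i) IH) => x y; rewrite big_cons Pi.
by apply: cont_on_ext IH => x y; rewrite big_cons Pi.
Qed.

Lemma cont_on_monomial (u v : word) (k : K) :
  u \in F -> v \in F -> cont_on (fun x y => x u * y v * k).
Proof.
move=> Fu Fv e e0.
set B := `|c u| + `|d v| + 1; set A := B * (`|k| + 1).
have B0 : 0 < B by rewrite ltr_wpDl ?addr_ge0.
have A0 : 0 < A by rewrite mulr_gt0 // ltr_wpDl.
have e0' : 0 < e / A by rewrite divr_gt0.
exists (pmin 1 (e / A)); first exact: pmin_gt0.
move=> x y /(_ u Fu) hx /(_ v Fv) hy.
set dl := pmin 1 (e / A) in hx hy.
have dl0 : 0 < dl by exact: pmin_gt0.
have dl1 : dl <= 1 by exact: pmin_lel.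
have dlA : dl * A <= e by rewrite -ler_pdivlMr // pmin_ler.
have yv : `|y v| <= `|d v| + 1.
  rewrite -[y v](subrK (d v)) addrC; apply: le_trans (ler_normD _ _) _.
  by rewrite lerD2l (le_trans (ltW hy)).
rewrite -mulrBl (_ : x u * y v - c u * d v = (x u - c u) * y v + c u * (y v - d v));
  last by ring.
rewrite normrM; apply: (@le_lt_trans _ _ (dl * B * `|k|)).
  apply: ler_wpM2r => //; apply: le_trans (ler_normD _ _) _; rewrite !normrM.
  rewrite [dl * _](_ : _ = dl * (`|d v| + 1) + `|c u| * dl); last by rewrite /B; ring.
  by apply: lerD; [apply: ler_pM | apply: ler_wpM2l]; rewrite // ltW.
by apply: lt_le_trans dlA; rewrite /A mulrA ltr_pM2l ?ltrDl // mulr_gt0.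
Qed.

Lemma cont_on_shuffle (w : word) :
  (forall u : word, (size u <= size w)%N -> u \in F) ->
  cont_on (fun x y => shuffle x y w).
Proof.
move=> hF; apply: cont_on_sum => k; apply: cont_on_sum => nu; apply: cont_on_sum => xi.
by apply: cont_on_monomial; apply: hF; rewrite size_tuple ?leq_subr // -ltnS.
Qed.

Lemma cont_on_all (I : eqType) (s : seq I) (G : I -> series -> series -> K) (e : K) :
  0 < e -> (forall i, i \in s -> cont_on (G i)) ->
  exists2 dl, 0 < dl & forall x y, near_on F dl x c -> near_on F dl y d ->
    forall i, i \in s -> `|G i x y - G i c d| < e.
Proof.
move=> e0; elim: s => [|i s IH] hG; first by exists 1 => // x y _ _ i.
have [d1 d10 h1] := IH (fun j js => hG j (mem_behead (s := i :: s) js)).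
have [d2 d20 h2] := hG i (mem_head i s) e e0.
have le1 : pmin d1 d2 <= d1 by exact: pmin_lel.
have le2 : pmin d1 d2 <= d2 by exact: pmin_ler.
exists (pmin d1 d2); first exact: pmin_gt0.
move=> x y hx hy j; rewrite in_cons => /predU1P[-> | js].
  by apply: h2; [exact: near_on_le le2 hx | exact: near_on_le le2 hy].
by apply: h1 => //; [exact: near_on_le le1 hx | exact: near_on_le le1 hy].
Qed.

End ContinuityOn.

Fixpoint words_upto (L : nat) : seq word :=
  if L is L'.+1 then [::] :: [seq a :: w | a <- enum 'I_m.+1, w <- words_upto L']
  else [:: [::]].

Lemma mem_words_upto (L : nat) (w : word) : (size w <= L)%N -> w \in words_upto L.
Proof.
elim: L w => [|L IH] [|a w] //= hw; rewrite in_cons; apply/orP; right.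
by apply: (allpairs_f (fun a w => a :: w)); [rewrite mem_enum | exact: IH].
Qed.

Definition frechet_interior (S : series -> Prop) (x : series) : Prop :=
  exists (F : seq word) (e : K), 0 < e /\ forall x', near_on F e x' x -> S x'.

Lemma frechet_open_interior (S : series -> Prop) : frechet_open (frechet_interior S).
Proof.
move=> x [F [e [e0 hS]]]; have e20 : 0 < e / 2 by rewrite divr_gt0.
exists F, (e / 2); split => // x' hx'; exists F, (e / 2); split => // x'' hx''.
apply: hS => w Fw; apply: le_lt_trans (ler_distD (x' w) _ _) _.
by rewrite [e]splitr ltrD ?hx' ?hx''.
Qed.

Lemma frechet_nbhd (F : seq word) (e : K) (c : series) : 0 < e ->
  exists U, [/\ frechet_open U, U c & forall x, U x -> near_on F e x c].
Proof.
move=> e0; exists (frechet_interior (near_on F e ^~ c)); split.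
- exact: frechet_open_interior.
- by exists F, e.
- by move=> x [F' [e' [e'0 h]]]; apply: h => w _; rewrite subrr normr0.
Qed.

Theorem frechet_continuous_shuffle : shuffle_frechet_continuous m K.
Proof.
move=> W hW [c d] /= Wcd; have [F [e [e0 hF]]] := hW _ Wcd.
set D := words_upto (\max_(w <- F) size w).
have hD w : w \in F -> forall u : word, (size u <= size w)%N -> u \in D.
  by move=> Fw u hu; apply/mem_words_upto/(leq_trans hu)/leq_bigmax_seq.
have [dl dl0 hdl] := cont_on_all (F := D) (c := c) (d := d)
  (G := fun w x y => shuffle x y w) e0 (fun w Fw => @cont_on_shuffle D c d w (hD w Fw)).
have [U [oU Uc hU]] := frechet_nbhd D c dl0.
have [V [oV Vd hV]] := frechet_nbhd D d dl0.
exists U, V; do 4 split => //.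
by move=> x y /hU hx /hV hy; apply: hF => w; exact: hdl.
Qed.

End Frechet.

Section SilvaNbhd.
Variables (m : nat) (K : numFieldType).
Local Notation series := (series m K).
Implicit Types (V Z : series -> Prop) (x y z : series).

Lemma silva_zero_nbhd0 V : silva_zero_nbhd V -> V (fun _ => 0).
Proof.
case=> _ [_ /(_ 1 ltr01) [r r0 hr]]; apply: hr => w.
by rewrite normr0 expr1n mulr1 mulr_ge0 // ltW.
Qed.

Lemma silva_zero_nbhd_mid V x y : silva_zero_nbhd V -> V x -> V y ->
  V (fun w => 2^-1 * x w + 2^-1 * y w).
Proof.
case=> _ [convV _] Vx Vy; apply: convV => //.
by rewrite ger0_norm ?invr_ge0 ?ler0n // [leRHS](splitr 1) mul1r.
Qed.

Lemma silva_zero_nbhd_add3 V x y z : silva_zero_nbhd V ->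
  V (fun w => 4 * x w) -> V (fun w => 4 * y w) -> V (fun w => 4 * z w) ->
  V (fun w => x w + y w + z w).
Proof.
move=> hV Vx Vy Vz.
have := silva_zero_nbhd_mid hV (silva_zero_nbhd_mid hV Vx (silva_zero_nbhd0 hV))
                              (silva_zero_nbhd_mid hV Vy Vz).
by congr V; apply: funext => w; field.
Qed.

Lemma silva_zero_nbhd_scale V (t : K) : 0 < t -> silva_zero_nbhd V ->
  silva_zero_nbhd (fun v => V (fun w => t * v w)).
Proof.
move=> t0 [LCV [convV ballV]]; split; [|split].
- move=> v /LCV/(fun h => LC_lin t^-1 0 h h); congr LC; apply: funext => w.
  by rewrite mul0r addr0 mulrA mulVf ?mul1r ?gt_eqF.
- move=> x y Vx Vy a b ab; have := convV _ _ Vx Vy a b ab.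
  by congr V; apply: funext => w; ring.
- move=> M /ballV [r r0 hr]; exists (r / t); first by rewrite divr_gt0.
  move=> e /(fun h => ell_ball_lin t 0 h h); rewrite normr0 mul0r addr0 gtr0_norm //.
  by rewrite mulrC divfK ?gt_eqF // => /hr; congr V; apply: funext => w; rewrite mul0r addr0.
Qed.

Lemma silva_zero_nbhdI V Z : silva_zero_nbhd V -> silva_zero_nbhd Z ->
  silva_zero_nbhd (fun v => V v /\ Z v).
Proof.
move=> [LCV [convV ballV]] [_ [convZ ballZ]]; split; [|split].
- by move=> v [/LCV].
- by move=> x y [Vx Zx] [Vy Zy] a b ab; split; [apply: convV | apply: convZ].
- move=> M M0; have [r1 r10 h1] := ballV M M0; have [r2 r20 h2] := ballZ M M0.
  exists (pmin r1 r2); first exact: pmin_gt0.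
  move=> e he; split; [apply: h1 | apply: h2]; apply: ell_ball_le he => //;
    by [exact: ltW | exact: pmin_lel | exact: pmin_ler].
Qed.

Definition linear_series (g : series -> series) := forall (a b : K) x y,
  g (fun w => a * x w + b * y w) = fun w => a * g x w + b * g y w.

Definition bounded_series (g : series -> series) := forall M, 0 < M ->
  exists M' k, [/\ 0 < M', 0 <= k & forall r e, ell_ball M r e -> ell_ball M' (r * k) (g e)].

Lemma silva_zero_nbhd_preim V (g : series -> series) :
  silva_zero_nbhd V -> linear_series g -> bounded_series g ->
  silva_zero_nbhd (fun v => LC v /\ V (g v)).
Proof.
move=> [_ [convV ballV]] glin gbd; split; [|split].
- by move=> v [].
- move=> x y [LCx Vx] [LCy Vy] a b ab; split; first exact: LC_lin.
  by rewrite glin; apply: convV.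
- move=> M M0; have [M' [k [M'0 k0 hk]]] := gbd M M0.
  have [r r0 hr] := ballV M' M'0; have k10 : 0 < k + 1 by rewrite ltr_wpDl.
  exists (r / (k + 1)); first by rewrite divr_gt0.
  move=> e he; split; first by exists M, (r / (k + 1)).
  apply: hr; apply: ell_ball_le (hk _ _ he) => //; first exact: ltW.
  by rewrite mulrAC ler_pdivrMr // ler_wpM2l ?lerDl // ltW.
Qed.

Definition silva_interior (S : series -> Prop) x : Prop :=
  exists Z, silva_zero_nbhd Z /\ forall z, Z z -> S (fun w => x w + z w).

Lemma silva_interior_sub (S : series -> Prop) x : silva_interior S x -> S x.
Proof.
move=> [Z [hZ hS]]; have := hS _ (silva_zero_nbhd0 hZ).
by congr S; apply: funext => w; rewrite addr0.
Qed.

Lemma silva_open_interior (S : series -> Prop) :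
  (forall x, S x -> LC x) -> silva_open (silva_interior S).
Proof.
move=> LCS; split; first by move=> x /silva_interior_sub /LCS.
have h20 : (0 : K) < 2 by rewrite ltr0n.
move=> x [Z [hZ hS]]; have hZ2 := silva_zero_nbhd_scale h20 hZ.
exists (fun v => Z (fun w => 2 * v w)); split => // z Zz.
exists (fun v => Z (fun w => 2 * v w)); split => // z' Zz'.
have := hS _ (silva_zero_nbhd_mid hZ Zz Zz'); congr S; apply: funext => w.
by rewrite !mulrA mulVf ?mul1r ?addrA ?pnatr_eq0.
Qed.

Lemma silva_nbhd Z c : LC c -> silva_zero_nbhd Z ->
  exists U, [/\ silva_open U, U c & forall x, U x -> Z (fun w => x w - c w)].
Proof.
move=> LCc hZ; have [LCZ _] := hZ.
exists (silva_interior (fun x => LC x /\ Z (fun w => x w - c w))); split.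
- by apply: silva_open_interior => x [].
- exists Z; split => // z Zz; split.
    by have := LC_lin 1 1 LCc (LCZ _ Zz); congr LC; apply: funext => w; rewrite !mul1r.
  by congr Z: Zz; apply: funext => w; rewrite addrC addKr.
- by move=> x /silva_interior_sub [].
Qed.

Lemma silva_zero_nbhd_radii (V : series -> Prop) (Ms : nat -> K) :
  silva_zero_nbhd V -> (forall N, 0 < Ms N) ->
  exists rho : nat -> K, [/\ forall N, 0 < rho N, forall N, rho N <= 1,
    forall i j, (i <= j)%N -> rho j <= rho i &
    forall N e, ell_ball (Ms N) (rho N) e -> V e].
Proof.
move=> [_ [_ ballV]] Ms0.
have /choice [r hr] : forall N, exists r, 0 < r /\ forall e, ell_ball (Ms N) r e -> V e.
  by move=> N; have [r r0 hr] := ballV _ (Ms0 N); exists r.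
pose rho := fix rho N := pmin (if N is N'.+1 then rho N' else 1) (r N).
have rho_gt0 N : 0 < rho N.
  by elim: N => [|N IH]; apply: pmin_gt0; rewrite // (proj1 (hr _)).
have rhoS N : rho N.+1 <= rho N by apply: pmin_lel; rewrite // (proj1 (hr _)).
have rho_ler N : rho N <= r N.
  by case: N => [|N]; apply: pmin_ler; rewrite // (proj1 (hr _)).
exists rho; split => //.
- by elim=> [|N IH]; [apply: pmin_lel; rewrite // (proj1 (hr _)) | exact: le_trans IH].
- exact: (homo_leq (r := fun a b => b <= a)) (@lexx _ _)
    (fun _ _ _ yx zy => le_trans zy yx) rhoS.
- move=> N e he; apply: (proj2 (hr N)); apply: ell_ball_le he => //; exact: ltW.
Qed.

End SilvaNbhd.

Section ShuffleBilinear.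
Variables (m : nat) (K : numFieldType).
Local Notation series := (series m K).

Lemma shuffle_linl (d : series) : linear_series (fun x => shuffle x d).
Proof.
move=> a b x y; apply: funext => w; rewrite /shuffle !mulr_sumr -big_split.
apply: eq_bigr => k _; rewrite !mulr_sumr -big_split; apply: eq_bigr => nu _.
by rewrite !mulr_sumr -big_split; apply: eq_bigr => xi _ /=; ring.
Qed.

Lemma shuffle_linr (c : series) : linear_series (shuffle c).
Proof.
move=> a b x y; apply: funext => w; rewrite /shuffle !mulr_sumr -big_split.
apply: eq_bigr => k _; rewrite !mulr_sumr -big_split; apply: eq_bigr => nu _.
by rewrite !mulr_sumr -big_split; apply: eq_bigr => xi _ /=; ring.
Qed.

Lemma shuffle_expand (x y c d : series) w :
  shuffle x y w = shuffle c d w +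
    (shuffle c (fun u => y u - d u) w + shuffle (fun u => x u - c u) d w
     + shuffle (fun u => x u - c u) (fun u => y u - d u) w).
Proof.
rewrite /shuffle -!big_split; apply: eq_bigr => k _.
rewrite -!big_split; apply: eq_bigr => nu _.
by rewrite -!big_split; apply: eq_bigr => xi _ /=; ring.
Qed.

Lemma shuffle_boundedl (d : series) : LC d -> bounded_series (fun x => shuffle x d).
Proof.
move=> [Md [rd [Md0 hd]]] M M0; have [M0' Md0'] := (ltW M0, ltW Md0).
exists ((4 * m.+1)%:R * (M + Md)), rd; split.
- by rewrite mulr_gt0 ?addr_gt0.
- exact: ell_ball_ge0 hd.
- move=> r e he; apply: ell_ball_shuffle; first exact: addr_ge0.
    by apply: ell_ball_le he; rewrite ?lerDl.
  by apply: ell_ball_le hd; rewrite ?lerDr.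
Qed.

Lemma shuffle_boundedr (c : series) : LC c -> bounded_series (shuffle c).
Proof.
move=> [Mc [rc [Mc0 hc]]] M M0; have [M0' Mc0'] := (ltW M0, ltW Mc0).
exists ((4 * m.+1)%:R * (M + Mc)), rc; split.
- by rewrite mulr_gt0 ?addr_gt0.
- exact: ell_ball_ge0 hc.
- move=> r e he; rewrite (mulrC r); apply: ell_ball_shuffle; first exact: addr_ge0.
    by apply: ell_ball_le hc; rewrite ?lerDr.
  by apply: ell_ball_le he; rewrite ?lerDl.
Qed.

End ShuffleBilinear.

Definition archimedean (K : numFieldType) := forall x : K, 0 < x -> exists n : nat, x <= n%:R.

Section HomogeneousParts.
Variables (m : nat) (K : numFieldType).
Local Notation series := (series m K).
Hypothesis archiK : archimedean K.

Definition hpart (n : nat) (e : series) : series :=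
  fun w => if size w == n then e w else 0.

Lemma silva_zero_nbhd_hparts (V : series -> Prop) (e : series) :
  silva_zero_nbhd V -> LC e -> (forall n, V (fun w => 2 ^+ n.+1 * hpart n e w)) -> V e.
Proof.
move=> hV [M [R [M0 hR]]] Vh; have [_ [_ ballV]] := hV; have R0 := ell_ball_ge0 hR.
have [r r0 hr] := ballV (4 * M) (mulr_gt0 (ltr0n _ 4) M0); have r0' := ltW r0.
have [L hL] := archiK (divr_gt0 (ltr_wpDl R0 ltr01) r0).
(* [tail j], i.e. 2^j times the part of [e] of degree >= j, is the midpoint of
   [2^(j+1) hpart j e] and [tail j.+1]; a far enough tail lies in a ball of [V]. *)
pose tail j : series := fun w => if (j <= size w)%N then 2 ^+ j * e w else 0.
have tailS j : V (tail j.+1) -> V (tail j).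
  move=> Vj; have := silva_zero_nbhd_mid hV (Vh j) Vj; congr V; apply: funext => w.
  rewrite /tail /hpart; case: (ltngtP (size w) j) => //= _;
  by rewrite ?mulr0 ?addr0 ?add0r // exprS -mulrA mulKf ?pnatr_eq0.
have tailL : V (tail L).
  apply: hr => w; rewrite /tail; case: ifP => Lw; last first.
    by rewrite normr0 !mulr_ge0 ?exprn_ge0 ?mulr_ge0 // ltW.
  have RL : R <= r * 2 ^+ L.
    have R1 : R <= R + 1 by rewrite lerDl.
    rewrite ler_pdivrMr // in hL; apply: le_trans (le_trans R1 hL) _.
    by rewrite mulrC ler_wpM2l // -natrX ler_nat ltnW // ltn_expl.
  set n := size w in Lw *.
  have key : 2 ^+ L * R <= r * 4 ^+ n.
    apply: le_trans (ler_wpM2l (exprn_ge0 _ (ler0n _ 2)) RL) _.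
    rewrite mulrCA ler_wpM2l // -exprD (_ : 4 ^+ n = 2 ^+ (n + n)).
      by rewrite ler_weXn2l ?ler1n //; lia.
    by rewrite exprD -exprMn -natrM.
  rewrite normrM ger0_norm ?exprn_ge0 //.
  apply: le_trans (ler_wpM2l (exprn_ge0 _ (ler0n _ 2)) (hR w)) _.
  by rewrite exprMn !mulrA ler_wpM2r // ler_wpM2r ?exprn_ge0 // ltW.
have Vtail d : V (tail (L - d)%N).
  elim: d => [|d IH]; first by rewrite subn0.
  have [dL | Ld] := ltnP d L; last by rewrite (_ : L - d.+1 = L - d)%N //; lia.
  by apply: tailS; rewrite (_ : (L - d.+1).+1 = L - d)%N //; lia.
have := Vtail L; rewrite subnn; congr V; apply: funext => w.
by rewrite /tail expr0 mul1r.
Qed.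

End HomogeneousParts.

Section FactorNbhd.
Variables (m : nat) (K : numFieldType).
Local Notation series := (series m K).
Hypothesis archiK : archimedean K.
Variable V : series -> Prop.
Hypothesis V_nbhd : silva_zero_nbhd V.
Variable rho : nat -> K.
Hypotheses (rho_gt0 : forall N, 0 < rho N) (rho_le1 : forall N, rho N <= 1)
  (rho_noninc : forall i j, (i <= j)%N -> rho j <= rho i).
(* The factor [32 * m.+1] absorbs the combinatorial growth of the shuffle
   product, see [shuffle_const_le]. *)
Hypothesis rho_ball : forall N e, ell_ball (32 * m.+1 * N.+1)%:R (rho N) e -> V e.

Definition weight (n : nat) := \sum_(i < n.+1) rho i * i.+1%:R ^+ n.

Definition factor_nbhd (a : series) :=
  LC a /\ forall w, 4 * `|a w| <= (size w)`!%:R * weight (size w).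

Lemma weight_ge (i n : nat) : (i <= n)%N -> rho i * i.+1%:R ^+ n <= weight n.
Proof.
move=> ni; rewrite /weight (bigD1 (Ordinal (ni : i < n.+1)%N)) //= lerDl.
by apply: sumr_ge0 => j _; rewrite mulr_ge0 ?exprn_ge0 // ltW.
Qed.

Lemma weight_ge0 (n : nat) : 0 <= weight n.
Proof. by apply: le_trans (weight_ge (leq0n n)); rewrite mulr_ge0 ?exprn_ge0 // ltW. Qed.

Lemma silva_zero_nbhd_factor : silva_zero_nbhd factor_nbhd.
Proof.
split; [by move=> a [] | split].
- move=> x y [LCx hx] [LCy hy] a b ab; split; first exact: LC_lin.
  move=> w; set P := _ * weight _; have P0 : 0 <= P by rewrite mulr_ge0 ?weight_ge0.
  apply: le_trans (_ : (`|a| + `|b|) * P <= P); last by rewrite ler_piMl.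
  apply: (@le_trans _ _ (`|a| * (4 * `|x w|) + `|b| * (4 * `|y w|))).
    rewrite (_ : _ + _ = 4 * (`|a * x w| + `|b * y w|)); last by rewrite !normrM; ring.
    by rewrite ler_wpM2l ?ler_normD.
  by rewrite (mulrDl `|a|); apply: lerD; apply: ler_wpM2l.
- move=> M M0; have [n0 Mn0] := archiK M0; have M0' := ltW M0.
  have M1 : 1 <= M + 1 by rewrite lerDr.
  set D := (M + 1) ^+ n0; have D1 : 1 <= D by exact: exprn_ege1.
  have D0 : 0 < D by exact: lt_le_trans ltr01 D1.
  have rD0 : 0 < rho n0 / (4 * D) by rewrite divr_gt0 ?mulr_gt0.
  exists (rho n0 / (4 * D)) => // e he; split; first by exists M, (rho n0 / (4 * D)).
  move=> w; set n := size w; apply: le_trans (ler_wpM2l (ler0n _ 4) (he w)) _.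
  rewrite (_ : 4 * _ = n`!%:R * (rho n0 * (M ^+ n / D))); last by field; rewrite gt_eqF.
  rewrite ler_wpM2l //; have [n0n | nn0] := leqP n0 n.
    apply: le_trans _ (weight_ge n0n); apply: ler_wpM2l; first exact: ltW.
    rewrite ler_pdivrMr //; apply: le_trans _ (ler_peMr (exprn_ge0 _ (ler0n _ _)) D1).
    apply: lerXn2r; rewrite ?nnegrE ?ler0n //.
    by apply: le_trans Mn0 _; rewrite ler_nat.
  apply: le_trans _ (weight_ge (leqnn n)); apply: ler_pM.
  - exact: ltW.
  - by rewrite divr_ge0 ?exprn_ge0 ?addr_ge0.
  - exact/rho_noninc/ltnW.
  apply: le_trans _ (exprn_ege1 _ _); last by rewrite ler1n.
  rewrite ler_pdivrMr // mul1r; apply: le_trans (ler_weXn2l M1 (ltnW nn0)).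
  by apply: lerXn2r; rewrite ?nnegrE ?lerDl ?addr_ge0.
Qed.

Lemma rho_mul_le (i j : nat) : rho i * rho j <= rho (maxn i j).
Proof.
by have [_ | _] := leqP i j; [apply: ler_piMl | apply: ler_piMr]; rewrite // ltW.
Qed.

Lemma weight_mul_le (k n J : nat) : (k <= n)%N ->
  (forall i, (i <= n)%N -> rho i * i.+1%:R ^+ n <= rho J * J.+1%:R ^+ n) ->
  weight k * weight (n - k) <= (n.+1 ^ 2)%:R * (rho J * J.+1%:R ^+ n).
Proof.
move=> kn maxJ; set T := rho J * _.
rewrite /weight mulr_suml.
apply: (@le_trans _ _ (\sum_(i < k.+1) \sum_(j < (n - k).+1) T)).
  apply: ler_sum => i _; rewrite mulr_sumr; apply: ler_sum => j _.
  have [ik jnk] : (i <= k)%N /\ (j <= n - k)%N by split; rewrite -ltnS.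
  apply: le_trans _ (maxJ (maxn i j) _); last by rewrite geq_max; apply/andP; lia.
  rewrite mulrACA; apply: ler_pM; rewrite ?mulr_ge0 ?exprn_ge0 ?rho_mul_le //; try exact: ltW.
  rewrite -[X in _ <= _ ^+ X](subnKC kn) exprD.
  by apply: ler_pM; rewrite ?exprn_ge0 //; apply: lerXn2r; rewrite ?nnegrE ?ler_nat ?ltnS
    ?leq_maxl ?leq_maxr.
have T0 : 0 <= T by rewrite mulr_ge0 ?exprn_ge0 // ltW.
rewrite !sumr_const !card_ord -mulrnA -[T *+ _]mulr_natl ler_wpM2r // ler_nat.
by rewrite mulnC leq_mul // ltnS leq_subr.
Qed.

Lemma shuffle_const_le (n : nat) :
  (2 ^ n.+1 * n.+1 ^ 3 * (m.+1 ^ n * 2 ^ n) <= (32 * m.+1) ^ n * 16)%N.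
Proof.
have n3 : (n.+1 ^ 3 <= (2 ^ n) ^ 3)%N by rewrite leq_exp2r // ltn_expl.
apply: leq_trans (leq_mul (leq_mul (leqnn _) n3) (leqnn _)) _.
rewrite expnMn (_ : 32 ^ n = (2 ^ n) ^ 5)%N; last by rewrite -expnM mulnC expnM.
rewrite expnS [X in (X <= _)%N](_ : _ = (2 ^ n) ^ 5 * m.+1 ^ n * 2)%N; last by ring.
exact: leq_mul.
Qed.

Lemma factor_nbhd_norm (a : series) : factor_nbhd a ->
  forall u, `|a u| <= (size u)`!%:R * weight (size u) / 4.
Proof. by move=> [_ ha] u; rewrite ler_pdivlMr // mulrC. Qed.

Lemma shuffle_factor_nbhd (a b : series) : factor_nbhd a -> factor_nbhd b -> V (shuffle a b).
Proof.
move=> ha hb; have [LCa _] := ha; have [LCb _] := hb.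
apply: (silva_zero_nbhd_hparts archiK V_nbhd (LC_shuffle LCa LCb)) => n.
have rho_ge0 i : 0 <= rho i * i.+1%:R ^+ n by rewrite mulr_ge0 ?exprn_ge0 // ltW.
have [J Jn maxJ] := exists_argmax n rho_ge0.
apply: (rho_ball (N := J)) => w; rewrite /hpart; case: eqP => [wn | _]; last first.
  by rewrite mulr0 normr0 !mulr_ge0 ?exprn_ge0 // ltW.
set T := rho J * J.+1%:R ^+ n; have T0 : 0 <= T := rho_ge0 J.
pose al k := k`!%:R * weight k / 4.
have term k : (k <= n)%N -> al k * al (n - k)%N * (m.+1 ^ n * 2 ^ n)%N%:R
    <= n`!%:R * ((n.+1 ^ 2)%N%:R * T) * (m.+1 ^ n * 2 ^ n)%N%:R / 16.
  move=> kn; rewrite (_ : _ * _ * _ = (k`! * (n - k)`!)%N%:R * (weight k * weight (n - k))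
                                      * (m.+1 ^ n * 2 ^ n)%N%:R / 16).
    rewrite ler_pdivrMr // divfK ?pnatr_eq0 // ler_wpM2r // ler_pM ?mulr_ge0 ?weight_ge0 //.
      by rewrite ler_nat -(bin_fact kn) leq_pmull ?bin_gt0.
    exact: weight_mul_le.
  by rewrite /al natrM; field.
rewrite normrM ger0_norm ?exprn_ge0 //.
apply: le_trans (ler_wpM2l (exprn_ge0 _ (ler0n _ 2))
  (normr_shuffle_le (al := al) (be := al) w (factor_nbhd_norm ha) (factor_nbhd_norm hb))) _.
rewrite wn; apply: le_trans (ler_wpM2l (exprn_ge0 _ (ler0n _ 2))
  (ler_sum _ (fun (k : 'I_n.+1) _ => term k (ltn_ord k)))) _.
rewrite sumr_const card_ord.
rewrite [leRHS](_ : _ = T * n`!%:R * ((32 * m.+1) ^ n)%N%:R); last first.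
  rewrite /T !(natrM, natrX) exprMn.
  by move: (J.+1%:R ^+ n) ((32 * m.+1%:R) ^+ n) => x y; ring.
rewrite [leLHS](_ : _ = T * n`!%:R * ((2 ^ n.+1 * n.+1 ^ 3 * (m.+1 ^ n * 2 ^ n))%N%:R / 16)).
  have Tn0 : 0 <= T * n`!%:R by rewrite mulr_ge0.
  rewrite ler_wpM2l // ler_pdivrMr // -natrM ler_nat; exact: shuffle_const_le.
rewrite -[_ *+ n.+1]mulr_natr !(natrM, natrX) exprS.
by move: (2 ^+ n) (m.+1%:R ^+ n) => x y; field.
Qed.

End FactorNbhd.

Theorem silva_continuous_shuffle (m : nat) (K : numFieldType) :
  archimedean K -> shuffle_silva_continuous m K.
Proof.
move=> archiK; split; first exact: LC_shuffle.
move=> W [_ openW] [c d] /= [LCc [LCd Wcd]].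
have [V0 [V0_nbhd V0W]] := openW _ Wcd.
have V_nbhd := silva_zero_nbhd_scale (ltr0n K 4) V0_nbhd.
have [rho [rho_gt0 rho_le1 rho_noninc rho_ball]] :=
  silva_zero_nbhd_radii (Ms := fun N => (32 * m.+1 * N.+1)%:R) V_nbhd
    (fun N => ltr0n K _ : 0 < (32 * m.+1 * N.+1)%:R).
have A_nbhd := silva_zero_nbhd_factor m archiK rho_gt0 rho_noninc.
have [U [openU Uc hU]] := silva_nbhd LCc (silva_zero_nbhdI A_nbhd
  (silva_zero_nbhd_preim V_nbhd (shuffle_linl d) (shuffle_boundedl LCd))).
have [U' [openU' U'd hU']] := silva_nbhd LCd (silva_zero_nbhdI A_nbhd
  (silva_zero_nbhd_preim V_nbhd (shuffle_linr c) (shuffle_boundedr LCc))).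
exists U, U'; do 4 (split; first by []); move=> x y Ux U'y.
have [[Ax [_ Vxd]] [Ay [_ Vcy]]] := (hU _ Ux, hU' _ U'y).
have Vxy := shuffle_factor_nbhd archiK V_nbhd rho_gt0 rho_le1 rho_ball Ax Ay.
have [[LCU _] [LCU' _]] := (openU, openU').
split; [exact: LCU | split; first exact: LCU'].
have := V0W _ (silva_zero_nbhd_add3 V0_nbhd Vcy Vxd Vxy); congr W.
by apply: funext => w; rewrite (shuffle_expand x y c d).
Qed.

Lemma realType_archimedean (R : realType) : archimedean R.
Proof. by move=> x x0; exists (Num.Def.archi_bound x); exact/ltW/archi_boundP/ltW. Qed.

Lemma complex_archimedean (R : realType) : archimedean R[i].
Proof.
move=> x; rewrite ltcE => /andP[/eqP xi /realType_archimedean[n xn]]; exists n.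
have -> : (n%:R : R[i]) = real_complex R n%:R by rewrite rmorph_nat.
by rewrite lecE /= xi eqxx.
Qed.

Theorem theorem3p4 (R : realType) (m : nat) :
  (shuffle_frechet_continuous m R /\ shuffle_silva_continuous m R) /\
  (shuffle_frechet_continuous m R[i] /\ shuffle_silva_continuous m R[i]).
Proof.
split; split; try exact: frechet_continuous_shuffle.
- exact/silva_continuous_shuffle/realType_archimedean.
- exact/silva_continuous_shuffle/complex_archimedean.
Qed.
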